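(* Let $k\in\mathbb{N}$ with $k\ge2$. For every actively connected set $S$, there exists a collection $\mathcal{S}_k$ of subsets of $S$, each containing at most $k$ elements, such that $\mathrm{cost}(\mathcal{S}_k)\le\big(1+\frac{1}{\lfloor\log_2 k\rfloor}\big)\cdot\mathrm{cost}(S)$ and $\mathrm{gain}(\mathcal{S}_k)=\mathrm{gain}(\{S\})$.
   Context: Steiner Forest: finite undirected graph $G=(V,E)$, non-negative edge costs $(c_e)_{e\in E}$, set $\mathcal{D}$ of demand pairs $\{a,b\}\subseteq V$ (partners). For $U\subseteq V$, $\delta(U)$ is the set of edges with exactly one endpoint in $U$. The $\varepsilon$-extended moat-growing algorithm (fixed $\varepsilon\ge0$): time $t$ increases continuously from $0$ at unit rate; it maintains tight edges $F$ (initially empty), duals $y_S(t)\ge0$ (initially $0$), and budgets of components (initially $0$). $\mathcal{C}^t$ is the family of vertex sets of connected components of $(V,F)$. A component is demand-active if it contains a vertex not connected in $(V,F)$ to some partner; budget-active if not demand-active but with positive budget; active if either; $\mathcal{A}^t$ is the set of active components. Each $y_S$, $S\in\mathcal{A}^t$, grows at unit rate; budgets of demand-active components grow at rate $\varepsilon$ and of budget-active ones decrease at rate $1$; an edge $e$ with $\sum_{S:e\in\delta(S)}y_S(t)=c_e$ becomes tight and is added to $F$; merging components add budgets. The deactivation time $\tau_v$ of $v$ is the largest $t$ such that for all $s<t$, $v$ lies in a set of $\mathcal{A}^s$. Vertices $u,v$ are actively connected if for some $t$ they lie in a common set of $\mathcal{C}^t$ and $\tau_u,\tau_v\ge t$;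 this is an equivalence relation and a set is actively connected if contained in one equivalence class. For a collection $\mathcal{S}$ of actively connected sets, $\mathcal{A}^t/\mathcal{S}$ arises from $\mathcal{A}^t$ by merging sets of $\mathcal{A}^t$ into a single set whenever they are intersected by the same $S\in\mathcal{S}$ (transitively), and $\mathrm{gain}(\mathcal{S})=2\int_0^\infty(|\mathcal{A}^t|-|\mathcal{A}^t/\mathcal{S}|)\,dt$. For $S\subseteq V$, $\mathrm{cost}(S)$ is the minimum cost $\sum_{e\in F}c_e$ of an edge set $F\subseteq E$ such that all vertices of $S$ lie in one connected component of $(V,F)$; $\mathrm{cost}(\mathcal{S})=\sum_{S\in\mathcal{S}}\mathrm{cost}(S)$. *)

From HB Require Import structures.
From mathcomp Require Import all_boot all_order all_algebra.
From mathcomp Require Import all_classical all_reals all_analysis.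
Set Implicit Arguments. Unset Strict Implicit. Unset Printing Implicit Defensive.
Import Order.TTheory GRing.Theory Num.Theory.
Local Open Scope ring_scope.

Section SteinerForest.
Variables (R : realType) (V E : finType) (eu ev : E -> V).

Definition adj (F : {set E}) : rel V := fun x y =>
  [exists e in F, ((eu e == x) && (ev e == y)) || ((eu e == y) && (ev e == x))].

Definition comp (F : {set E}) (x : V) : {set V} := [set y | connect (adj F) x y].

Definition comps (F : {set E}) : {set {set V}} := [set comp F x | x in [set: V]].

Definition crosses (e : E) (S : {set V}) : bool := (eu e \in S) != (ev e \in S).

Definition connects (F : {set E}) (S : {set V}) : bool :=
  [forall x in S, forall y in S, connect (adj F) x y].

Definition cost (c : E -> R) (S : {set V}) : \bar R :=
  \big[Order.min/+oo%E]_(F : {set E} | connects F S) (\sum_(e in F) c e)%:E.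

Definition demand_active (D : {set {set V}}) (F : {set E}) (S : {set V}) : bool :=
  [exists d in D, exists a in d, exists b in d, (a \in S) && ~~ connect (adj F) a b].

Definition tmeas (P : R -> Prop) (t : R) : R :=
  fine (lebesgue_measure [set s : R | 0 <= s /\ s < t /\ P s]%classic).

(* Run of the algorithm described by F t (tight edges at time t) and
   Act t (the family A^t of active components at time t). *)
Variables (c : E -> R) (D : {set {set V}}) (eps : R)
          (F : R -> {set E}) (Act : R -> {set {set V}}).

Definition yS (S : {set V}) (t : R) : R := tmeas (fun s => S \in Act s) t.

Definition load (e : E) (t : R) : R := \sum_(S : {set V} | crosses e S) yS S t.

(* budget of the component S at time t: budgets start at 0, add on merging,
   grow at rate eps while demand-active and decrease at rate 1 while
   budget-active; summing over all earlier components T contained in S. *)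
Definition bud (S : {set V}) (t : R) : R :=
  \sum_(T : {set V} | T \subset S)
     (eps * tmeas (fun s => T \in Act s /\ demand_active D (F s) T) t
      - tmeas (fun s => T \in Act s /\ ~~ demand_active D (F s) T) t).

Definition valid_run : Prop :=
  [/\ (forall t, 0 <= t -> F t = [set e | c e <= load e t]),
      (forall t, 0 <= t -> Act t =
          [set S in comps (F t) | demand_active D (F t) S || (0 < bud S t)]) &
      (exists s : seq R, forall t1 t2, 0 <= t1 -> t1 <= t2 ->
          (forall b, b \in s -> ~ (t1 < b /\ b <= t2)) ->
          F t1 = F t2 /\ Act t1 = Act t2)].

(* deactivation time tau_v (in \bar R, +oo if v never deactivates) *)
Definition tau (v : V) : \bar R :=
  ereal_sup ((fun t : R => t%:E) @`
    [set t : R | 0 <= t /\ forall s, 0 <= s -> s < t ->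
                   exists2 S, S \in Act s & v \in S])%classic.

Definition act_conn (u v : V) : Prop :=
  exists t : R, [/\ 0 <= t, v \in comp (F t) u, (t%:E <= tau u)%E & (t%:E <= tau v)%E].

Definition act_conn_set (S : {set V}) : Prop :=
  forall u v, u \in S -> v \in S -> act_conn u v.

(* A^t / Ss: merge sets of A^t intersected by a common member of Ss, transitively *)
Definition mrel (Ss : {set {set V}}) (t : R) : rel {set V} := fun X Y =>
  [&& X \in Act t, Y \in Act t &
      [exists S in Ss, ~~ [disjoint S & X] && ~~ [disjoint S & Y]]].

Definition merged (Ss : {set {set V}}) (t : R) : {set {set V}} :=
  [set \bigcup_(Y in Act t | connect (mrel Ss t) X Y) Y | X in Act t].

Definition gain (Ss : {set {set V}}) : \bar R :=
  (2%:E * \int[lebesgue_measure]_(t in [set t : R | (0 <= t)%R]%classic)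
            ((#|Act t|)%:R - (#|merged Ss t|)%:R)%:E)%E.

End SteinerForest.

(* Being actively connected, S is connected in G, so cost(S) is attained by an
   edge set F.  With pair_cost u v := cost {u, v}, a metric on the component of
   F, the edges of F yield a binary tree of weight at most cost(S) (grow it by
   grafting one edge at a time), and splicing out the branches without vertices
   of S leaves a tree whose leaves are exactly S, by the triangle inequality.
   As in Borchers and Du, cut this tree at every h-th level, h = trunc_log 2 k,
   representing a cut node by the rightmost leaf of its left subtree.  The
   pieces have at most 2^h <= k leaves and pay for every tree edge once, plus
   the paths from cut nodes to their representatives; these paths are
   edge-disjoint and each node is cut for exactly one of the h offsets, so some
   offset costs at most (1 + 1/h) times the tree.
   The pieces form a connected hypergraph on S.  Hence at every time t merging
   the active sets along the pieces or along S gives the same partition: while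
   all of S is active the pieces chain the active sets met by S together, and
   once some w in S is inactive, active connectivity already puts all of S in
   the component of w.  So the gains agree. *)

From Pilot Require Import Defs.
From HB Require Import structures.
From mathcomp Require Import all_boot all_order all_algebra.
From mathcomp Require Import all_classical all_reals all_analysis.
From mathcomp Require Import ring lra.
Import Order.TTheory GRing.Theory Num.Theory.
Local Open Scope ring_scope.
Set Implicit Arguments. Unset Strict Implicit. Unset Printing Implicit Defensive.

Lemma connect_stable (T : finType) (r : rel T) (pT : predType T) (A : pT) :
  (forall a b, r a b -> a \in A -> b \in A) ->
  forall x y, connect r x y -> x \in A -> y \in A.
Proof.
move=> rA x y /connectP[p pth ->]; elim: p x pth => [|z p IH] x //= /andP[rxz pth] xA.
exact: IH pth (rA _ _ rxz xA).
Qed.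

Section Connectivity.
Variables (V E : finType) (eu ev : E -> V).
Implicit Types (F : {set E}) (A B : {set V}).
Local Notation adj := (adj eu ev).
Local Notation connects := (connects eu ev).

Lemma adjC F : symmetric (adj F).
Proof.
move=> x y; apply/existsP/existsP => -[e /andP[eF exy]]; exists e;
  by rewrite eF orbC.
Qed.

Lemma connect_adjC F : connect_sym (adj F).
Proof. exact/sym_connect_sym/adjC. Qed.

Lemma adj_subset F1 F2 : F1 \subset F2 -> subrel (adj F1) (adj F2).
Proof.
move=> sF12 x y /existsP[e /andP[eF exy]]; apply/existsP; exists e.
by rewrite (fintype.subsetP sF12 _ eF).
Qed.

Lemma connect_adj_subset F1 F2 :
  F1 \subset F2 -> subrel (connect (adj F1)) (connect (adj F2)).
Proof. by move=> sF12; apply: connect_sub => x y /(adj_subset sF12)/connect1. Qed.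

Lemma adj_edge F e : e \in F -> adj F (eu e) (ev e).
Proof. by move=> eF; apply/existsP; exists e; rewrite eF !eqxx. Qed.

Lemma adj_setD1 F e a b : adj F a b ->
  adj (F :\ e) a b \/ (a \in [set eu e; ev e]) && (b \in [set eu e; ev e]).
Proof.
move=> /existsP[e' /andP[e'F eab]]; case: (eqVneq e' e) eab => [->|ne'] eab.
  by right; case/orP: eab => /andP[/eqP<- /eqP<-]; rewrite !inE !eqxx ?orbT.
by left; apply/existsP; exists e'; rewrite !inE ne' e'F.
Qed.

Lemma connectsP F A :
  reflect {in A &, forall x y, connect (adj F) x y} (connects F A).
Proof.
apply: (iffP forallP) => [cA x y xA yA | cA x].
  by move: (cA x); rewrite xA => /forallP/(_ y); rewrite yA.
by apply/implyP => xA; apply/forallP => y; apply/implyP => yA; apply: cA.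
Qed.

Lemma connects_subset F A B : A \subset B -> connects F B -> connects F A.
Proof.
move=> sAB /connectsP cB; apply/connectsP => x y xA yA.
by apply: cB; apply: (fintype.subsetP sAB).
Qed.

Lemma connects_setU F1 F2 A B x : x \in A -> x \in B ->
  connects F1 A -> connects F2 B -> connects (F1 :|: F2) (A :|: B).
Proof.
move=> xA xB /connectsP cA /connectsP cB; apply/connectsP.
have cA' : {in A &, forall a b, connect (adj (F1 :|: F2)) a b}.
  by move=> a b aA bA; apply: connect_adj_subset (finset.subsetUl _ _) _ _ (cA _ _ aA bA).
have cB' : {in B &, forall a b, connect (adj (F1 :|: F2)) a b}.
  by move=> a b aB bB; apply: connect_adj_subset (finset.subsetUr _ _) _ _ (cB _ _ aB bB).
move=> a b; rewrite !inE => /orP[aA|aB] /orP[bA|bB].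
- exact: cA'.
- exact: connect_trans (cA' _ _ aA xA) (cB' _ _ xB bB).
- exact: connect_trans (cB' _ _ aB xB) (cA' _ _ xA bA).
- exact: cB'.
Qed.

Lemma connects_edge e : connects [set e] [set eu e; ev e].
Proof.
apply/connectsP => a b; rewrite !inE => /orP[]/eqP-> /orP[]/eqP->;
  rewrite ?connect0 // connect1 // ?[adj _ (ev e) _]adjC; exact: adj_edge (set11 e).
Qed.

Lemma connects_pair F u v : connect (adj F) u v -> connects F [set u; v].
Proof.
move=> cuv; apply/connectsP => a b; rewrite !inE => /orP[]/eqP-> /orP[]/eqP->;
  by rewrite ?connect0 // connect_adjC.
Qed.

End Connectivity.

Section Cost.
Variables (R : realType) (V E : finType) (eu ev : E -> V) (c : E -> R).
Hypothesis c_ge0 : forall e, 0 <= c e.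
Implicit Types (F : {set E}) (A B S : {set V}).
Local Notation adj := (adj eu ev).
Local Notation connects := (connects eu ev).
Local Notation cost := (cost eu ev c).

Lemma cost_le_sum F S : connects F S -> (cost S <= (\sum_(e in F) c e)%:E)%E.
Proof. by move=> cFS; rewrite /cost; exact: (@bigmin_le_cond _ _ _ _ F (connects^~ S)). Qed.

Lemma cost_pinfty_or_attained S : cost S = +oo%E \/
  exists2 F, connects F S & cost S = (\sum_(e in F) c e)%:E.
Proof.
rewrite /cost; apply: (big_ind (fun x => x = +oo%E \/
  exists2 F, connects F S & x = (\sum_(e in F) c e)%:E)) => [|x y|F cFS].
- by left.
- by rewrite /Order.min; case: ifP.
- by right; exists F.
Qed.

Lemma cost_ge0 S : (0 <= cost S)%E.
Proof.
case: (cost_pinfty_or_attained S) => [->|[F _ ->]]; first exact: leey.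
by rewrite lee_fin sumr_ge0.
Qed.

Lemma le_cost A B : A \subset B -> (cost A <= cost B)%E.
Proof.
move=> sAB; case: (cost_pinfty_or_attained B) => [->|[F cFB ->]]; first exact: leey.
exact/cost_le_sum/(connects_subset sAB).
Qed.

Lemma sum_setU_le F1 F2 :
  \sum_(e in F1 :|: F2) c e <= \sum_(e in F1) c e + \sum_(e in F2) c e.
Proof.
rewrite [X in X <= _]big_mkcond [in X in _ <= X + _]big_mkcond
  [in X in _ <= _ + X]big_mkcond -big_split /=.
apply: ler_sum => e _; rewrite inE.
by case: (e \in F1); case: (e \in F2); rewrite ?addr0 ?add0r ?lerDl.
Qed.

Lemma cost_setU A B x : x \in A -> x \in B ->
  (cost (A :|: B) <= cost A + cost B)%E.
Proof.
move=> xA xB.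
case: (cost_pinfty_or_attained A) => [->|[F1 cA ->]];
  case: (cost_pinfty_or_attained B) => [->|[F2 cB ->]]; rewrite ?addye ?addey ?leey //.
apply: le_trans (cost_le_sum (connects_setU xA xB cA cB)) _.
by rewrite -EFinD lee_fin sum_setU_le.
Qed.

Lemma cost_edge e : (cost [set eu e; ev e] <= (c e)%:E)%E.
Proof. by apply: le_trans (cost_le_sum (connects_edge eu ev e)) _; rewrite big_set1. Qed.

Lemma cost_set1 x : cost [set x] = 0%E.
Proof.
apply/eqP; rewrite eq_le cost_ge0 andbT.
have cx : connects finset.set0 [set x] by apply/connectsP => a b; rewrite !inE => /eqP-> /eqP->.
by apply: le_trans (cost_le_sum cx) _; rewrite big_set0.
Qed.

Lemma cost_fin_connect F S : connects F S -> cost S = (fine (cost S))%:E.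
Proof.
move=> cFS; rewrite fineK // ge0_fin_numE ?cost_ge0 //.
exact: le_lt_trans (cost_le_sum cFS) (ltry _).
Qed.

End Cost.

Section PairCost.
Variables (R : realType) (V E : finType) (eu ev : E -> V) (c : E -> R).
Hypothesis c_ge0 : forall e, 0 <= c e.
Local Notation adj := (adj eu ev).
Local Notation cost := (cost eu ev c).

Definition pair_cost (u v : V) : R := fine (cost [set u; v]).

Lemma pair_cost_ge0 u v : 0 <= pair_cost u v.
Proof. exact/fine_ge0/cost_ge0. Qed.

Lemma pair_costxx u : pair_cost u u = 0.
Proof. by rewrite /pair_cost finset.setUid cost_set1. Qed.

Lemma pair_costC u v : pair_cost u v = pair_cost v u.
Proof. by rewrite /pair_cost finset.setUC. Qed.

Lemma pair_cost_edge e : pair_cost (eu e) (ev e) <= c e.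
Proof.
by rewrite -lee_fin /pair_cost -(cost_fin_connect c_ge0 (connects_edge eu ev e)) cost_edge.
Qed.

Lemma cost_pair F u v : connect (adj F) u v -> cost [set u; v] = (pair_cost u v)%:E.
Proof. by move/connects_pair/(cost_fin_connect c_ge0). Qed.

Lemma pair_cost_triangle F u v w : connect (adj F) u v -> connect (adj F) v w ->
  pair_cost u w <= pair_cost u v + pair_cost v w.
Proof.
move=> cuv cvw; rewrite -lee_fin EFinD -(cost_pair (connect_trans cuv cvw)).
rewrite -(cost_pair cuv) -(cost_pair cvw).
have vuv : v \in [set u; v] by rewrite !inE eqxx orbT.
have vvw : v \in [set v; w] by rewrite !inE eqxx.
apply: (le_trans _ (cost_setU eu ev c_ge0 vuv vvw)); apply: le_cost.
by apply/fintype.subsetP => z; rewrite !inE => /orP[]->; rewrite ?orbT.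
Qed.

End PairCost.

Inductive btree (T : Type) := Leaf of T | Node of T & btree T & btree T.
Arguments Leaf {T}.
Arguments Node {T}.

Section BinaryTrees.
Variables (R : realType) (T : eqType) (d : T -> T -> R).
Implicit Types (t s : btree T) (u v y : T).

Definition troot t := match t with Leaf v | Node v _ _ => v end.

Fixpoint leaves t : seq T :=
  match t with Leaf v => [:: v] | Node _ l r => leaves l ++ leaves r end.

Fixpoint labels t : seq T :=
  match t with Leaf v => [:: v] | Node v l r => v :: labels l ++ labels r end.

Fixpoint tweight t : R :=
  match t with
  | Leaf _ => 0
  | Node v l r => d v (troot l) + d v (troot r) + tweight l + tweight r
  end.

Fixpoint graft t u s : btree T :=
  match t with
  | Leaf v => if v == u then Node u (Leaf u) s else Leaf v
  | Node v l r => if u \in leaves l then Node v (graft l u s) r else Node v l (graft r u s)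
  end.

Lemma troot_labels t : troot t \in labels t.
Proof. by case: t => [v|v l r]; rewrite inE eqxx. Qed.

Lemma labels_sub_node v l r :
  {subset labels l <= labels (Node v l r)} /\ {subset labels r <= labels (Node v l r)}.
Proof. by split=> y yt; rewrite inE mem_cat yt ?orbT. Qed.

Lemma troot_graft t u s : troot (graft t u s) = troot t.
Proof. by case: t => [v|v l r] /=; [case: eqP => [->|] | case: ifP]. Qed.

Lemma leaves_graft t u s : u \in leaves t ->
  leaves (graft t u s) =i [predU leaves t & leaves s].
Proof.
elim: t => [v|v l IHl r IHr] /=.
  by rewrite inE => /eqP->; rewrite eqxx => y; rewrite !inE.
rewrite mem_cat; case: ifP => [ul _|_ ur] y /=; rewrite !inE !mem_cat ?(IHl ul) ?(IHr ur) !inE;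
  by case: (y \in leaves l); case: (y \in leaves r); case: (y \in leaves s).
Qed.

Lemma labels_graft t u s y : y \in labels (graft t u s) ->
  (y \in labels t) || (y \in labels s).
Proof.
elim: t => [v|v l IHl r IHr] /=.
  case: eqP => [->|_] /=; last by move->.
  by rewrite !inE => /or3P[]->; rewrite ?orbT.
case: ifP => _ /=; rewrite !inE !mem_cat => /or3P[->//|yl|yr].
- by case/orP: (IHl yl) => ->; rewrite ?orbT.
- by rewrite yr !orbT.
- by rewrite yl !orbT.
- by case/orP: (IHr yr) => ->; rewrite ?orbT.
Qed.

Lemma tweight_graft t u s : u \in leaves t ->
  tweight (graft t u s) = tweight t + d u u + d u (troot s) + tweight s.
Proof.
elim: t => [v|v l IHl r IHr] /=.
  by rewrite inE => /eqP->; rewrite eqxx /=; ring.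
rewrite mem_cat; case: ifP => [ul _|_ ur] /=; rewrite troot_graft.
  by rewrite (IHl ul); ring.
by rewrite (IHr ur); ring.
Qed.

End BinaryTrees.

Section SpanningTree.
Variables (R : realType) (V E : finType) (eu ev : E -> V) (c : E -> R) (d : V -> V -> R).
Hypothesis c_ge0 : forall e, 0 <= c e.
Hypothesis dxx : forall u, d u u = 0.
Hypothesis dC : forall u v, d u v = d v u.
Hypothesis d_edge : forall e, d (eu e) (ev e) <= c e.
Implicit Types (F : {set E}) (x y : V) (t : btree V).
Local Notation adj := (adj eu ev).
Local Notation comp := (Defs.comp eu ev).

Lemma mem_comp F x y : (y \in comp F x) = connect (adj F) x y.
Proof. by rewrite inE. Qed.

Lemma comp_stable F x p q : adj F p q -> p \in comp F x -> q \in comp F x.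
Proof. by rewrite !mem_comp => pq xp; apply: connect_trans xp (connect1 pq). Qed.

Lemma comp_setD1_subset F e x : {subset comp (F :\ e) x <= comp F x}.
Proof. by move=> y; rewrite !mem_comp; apply: connect_adj_subset; apply: subsetDl. Qed.

Lemma comp_connect F x u v : u \in comp F x -> v \in comp F x -> connect (adj F) u v.
Proof. by rewrite !mem_comp connect_adjC => xu; apply: connect_trans. Qed.

Definition comp_cost F x := \sum_(e in F | eu e \in comp F x) c e.

Lemma comp_cost_le_sum F x : comp_cost F x <= \sum_(e in F) c e.
Proof.
rewrite /comp_cost [X in _ <= X](bigID (fun e => eu e \in comp F x)) /= lerDl.
exact: sumr_ge0.
Qed.

Lemma comp_cost_ge0 F x : 0 <= comp_cost F x.
Proof. exact: sumr_ge0. Qed.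

Lemma comp_cost_setD1 F e x : comp_cost (F :\ e) x <= comp_cost F x.
Proof.
rewrite /comp_cost [X in X <= _]big_mkcond [X in _ <= X]big_mkcond /=.
apply: ler_sum => e' _; case: ifP => [/andP[]|_]; last by case: ifP.
by rewrite in_setD1 => /andP[_ ->] /comp_setD1_subset->.
Qed.

Definition spans F x t := [/\ troot t = x, {subset comp F x <= leaves t},
  {subset labels t <= comp F x} & tweight d t <= comp_cost F x].

Lemma spans_set0 x : spans finset.set0 x (Leaf x).
Proof.
split=> //=; last exact: comp_cost_ge0.
- move=> y; rewrite mem_comp => xy; apply: (connect_stable _ xy); last by rewrite inE.
  by move=> a b /existsP[e]; rewrite inE.
- by move=> y; rewrite inE => /eqP->; rewrite mem_comp connect0.
Qed.

Lemma spans_setD1 F e x t : (eu e \in comp (F :\ e) x) = (ev e \in comp (F :\ e) x) ->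
  spans (F :\ e) x t -> spans F x t.
Proof.
move=> same [rt lv lb wt]; split=> //.
- move=> y; rewrite mem_comp => xy; apply: lv; apply: (connect_stable _ xy);
    last by rewrite mem_comp connect0.
  move=> p q /(adj_setD1 e) [pq|/andP[pe qe]]; first exact: comp_stable.
  by move: pe qe; rewrite !in_set2 => /orP[]/eqP-> /orP[]/eqP->; rewrite -?same.
- by move=> y /lb /comp_setD1_subset.
- exact: le_trans wt (comp_cost_setD1 _ _ _).
Qed.

Section GraftStep.
Variables (F : {set E}) (e : E) (x a b : V).
Hypothesis eF : e \in F.
Hypothesis eab : (a, b) = (eu e, ev e) \/ (a, b) = (ev e, eu e).
Hypothesis xa : a \in comp (F :\ e) x.
Hypothesis xb : b \notin comp (F :\ e) x.

Lemma adj_ends : adj F a b.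
Proof. by case: eab => -[-> ->]; rewrite ?[adj _ (ev e) _]adjC adj_edge. Qed.

Lemma mem_comp_end : b \in comp F x.
Proof. exact: comp_stable adj_ends (comp_setD1_subset xa). Qed.

Lemma comp_setD1_split :
  {subset comp F x <= [predU comp (F :\ e) x & comp (F :\ e) b]}.
Proof.
move=> y; rewrite mem_comp => xy; apply: (connect_stable _ xy);
  last by rewrite !inE /= connect0.
move=> p q /(adj_setD1 e) [pq|/andP[_ qe]].
  by rewrite !inE /= -!mem_comp => /orP[] /(comp_stable pq) ->; rewrite ?orbT.
have : (q == a) || (q == b) by case: eab qe => -[-> ->]; rewrite in_set2 // orbC.
by case/orP => /eqP-> _; rewrite !inE /= ?connect0 ?orbT // -(mem_comp (F :\ e) x) xa.
Qed.

Lemma comp_cost_split : comp_cost (F :\ e) x + comp_cost (F :\ e) b + c e <= comp_cost F x.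
Proof.
have ex : eu e \in comp F x.
  case: eab => -[ea eb]; first by rewrite -ea (comp_setD1_subset xa).
  by rewrite -eb mem_comp_end.
rewrite /comp_cost [X in _ <= X](bigD1 e) /=; last by rewrite eF ex.
rewrite [X in X <= _]addrC lerD2l [X in X + _ <= _]big_mkcond [X in _ + X <= _]big_mkcond.
rewrite [X in _ <= X]big_mkcond -big_split /=; apply: ler_sum => e' _.
rewrite in_setD1; case: (eqVneq e' e) => [_|_] /=; first by rewrite andbF addr0.
rewrite andbT; case: (e' \in F) => /=; last by rewrite addr0.
case x_e: (eu e' \in comp (F :\ e) x); case b_e: (eu e' \in comp (F :\ e) b) => /=.
- case/negP: xb; move: x_e b_e; rewrite !mem_comp => x_e b_e.
  by apply: connect_trans x_e _; rewrite connect_adjC.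
- by rewrite (comp_setD1_subset x_e) addr0.
- have := comp_setD1_subset b_e; rewrite !mem_comp => be'.
  by move: mem_comp_end; rewrite mem_comp => /connect_trans/(_ be') ->; rewrite add0r.
- by rewrite addr0; case: ifP.
Qed.

Lemma spans_graft t1 t2 : spans (F :\ e) x t1 -> spans (F :\ e) b t2 ->
  spans F x (graft t1 a t2).
Proof.
move=> [rt1 lv1 lb1 w1] [rt2 lv2 lb2 w2].
have at1 := lv1 _ xa.
split.
- by rewrite troot_graft.
- move=> y /comp_setD1_split /orP[/lv1|/lv2] yt;
    by rewrite (leaves_graft t2 at1) inE /= yt ?orbT.
- move=> y /labels_graft /orP[/lb1/comp_setD1_subset //|/lb2/comp_setD1_subset].
  by rewrite !mem_comp; apply: connect_trans; rewrite -mem_comp mem_comp_end.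
- rewrite (tweight_graft d t2 at1) dxx addr0 rt2.
  have dab : d a b <= c e by case: eab => -[-> ->]; rewrite ?[d (ev e) _]dC d_edge.
  by apply: le_trans comp_cost_split; lra.
Qed.

End GraftStep.

Lemma spanning_tree F x : exists t, spans F x t.
Proof.
elim: {F}#|F| {-2}F (erefl #|F|) x => [|n IH] F cardF x.
  by exists (Leaf x); move/eqP: cardF; rewrite cards_eq0 => /eqP->; apply: spans_set0.
have [e eF] : exists e, e \in F by apply/set0Pn; rewrite -card_gt0 cardF.
have cardFe : #|F :\ e| = n by move: cardF; rewrite (cardsD1 e) eF => -[].
have [t1 sp1] := IH _ cardFe x.
case xu: (eu e \in comp (F :\ e) x); case xv: (ev e \in comp (F :\ e) x).
- by exists t1; apply: spans_setD1 sp1; rewrite xu xv.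
- have [t2 sp2] := IH _ cardFe (ev e).
  by exists (graft t1 (eu e) t2); exact (spans_graft eF (or_introl erefl) xu (negbT xv) sp1 sp2).
- have [t2 sp2] := IH _ cardFe (eu e).
  by exists (graft t1 (ev e) t2); exact (spans_graft eF (or_intror erefl) xv (negbT xu) sp1 sp2).
- by exists t1; apply: spans_setD1 sp1; rewrite xu xv.
Qed.

End SpanningTree.

Section Pruning.
Variables (R : realType) (T : eqType) (d : T -> T -> R) (K P : {pred T}).
Hypothesis d_ge0 : forall u v, 0 <= d u v.
Hypothesis d_triangle : {in K & &, forall u v w, d u w <= d u v + d v w}.
Implicit Types (t : btree T) (p : T).

Fixpoint prune t : option (btree T) :=
  match t with
  | Leaf v => if v \in P then Some (Leaf v) else None
  | Node v l r => match prune l, prune r with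
                  | Some l', Some r' => Some (Node v l' r')
                  | Some l', None => Some l'
                  | None, Some r' => Some r'
                  | None, None => None
                  end
  end.

Lemma tweight_ge0 t : 0 <= tweight d t.
Proof. by elim: t => [v|v l IHl r IHr] //=; rewrite !addr_ge0. Qed.

(* The weight bound is stated with the edge to a parent [p] attached: when a
   pruned node is spliced out, its child is hung directly below [p]. *)
Lemma pruneP t :
  match prune t with
  | None => {in leaves t, forall y, y \notin P}
  | Some t' => [/\ leaves t' =i [predI leaves t & P],
                   {subset labels t' <= labels t} &
                   forall p, p \in K -> {subset labels t <= K} ->
                     d p (troot t') + tweight d t' <= d p (troot t) + tweight d t]
  end.
Proof.
elim: t => [v|v l IHl r IHr] /=.
  case: ifP => Pv /=; last by move=> y; rewrite inE => /eqP->; rewrite Pv.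
  by split=> // y; rewrite !inE; case: eqVneq => // ->.
have [subl subr] := labels_sub_node v l r.
case: (prune l) IHl => [l'|] IHl; case: (prune r) IHr => [r'|] IHr.
- case: IHl => lvl lbl wl; case: IHr => lvr lbr wr; split.
  + by move=> y; rewrite /= mem_cat lvl lvr !inE /= mem_cat andb_orl.
  + move=> y; rewrite /= !inE !mem_cat => /or3P[->//|/lbl|/lbr] yt; by rewrite yt ?orbT.
  + move=> p Kp Kt /=; have Kv : v \in K by apply: Kt; rewrite inE eqxx.
    have := wl v Kv (fun y yl => Kt y (subl y yl)).
    have := wr v Kv (fun y yr => Kt y (subr y yr)); lra.
- case: IHl => lvl lbl wl; split.
  + move=> y; rewrite /= lvl !inE /= !mem_cat andb_orl.
    by case: (boolP (y \in leaves r)) => [/IHr/negbTE->|]; rewrite ?andbF ?orbF.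
  + by move=> y /lbl /subl.
  + move=> p Kp Kt /=; have Kv : v \in K by apply: Kt; rewrite inE eqxx.
    have Kl' : troot l' \in K by apply/Kt/subl/lbl/troot_labels.
    have := wl v Kv (fun y yl => Kt y (subl y yl)); have := d_triangle Kp Kv Kl'.
    have := d_ge0 v (troot r); have := tweight_ge0 r; lra.
- case: IHr => lvr lbr wr; split.
  + move=> y; rewrite /= lvr !inE /= !mem_cat andb_orl.
    by case: (boolP (y \in leaves l)) => [/IHl/negbTE->|]; rewrite ?andbF.
  + by move=> y /lbr /subr.
  + move=> p Kp Kt /=; have Kv : v \in K by apply: Kt; rewrite inE eqxx.
    have Kr' : troot r' \in K by apply/Kt/subr/lbr/troot_labels.
    have := wr v Kv (fun y yr => Kt y (subr y yr)); have := d_triangle Kp Kv Kr'.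
    have := d_ge0 v (troot l); have := tweight_ge0 l; lra.
- by move=> y; rewrite mem_cat => /orP[/IHl|/IHr].
Qed.

End Pruning.

Section LevelDecomposition.
Variables (R : realType) (T : finType) (d : T -> T -> R) (K : {pred T}) (h1 : nat).
Variable kap : {set T} -> \bar R.
Implicit Types (t : btree T) (m : nat) (A B : {set T}) (s : seq T) (H : seq (seq T)).
Hypothesis d_ge0 : forall u v, 0 <= d u v.
Hypothesis kap_ge0 : forall A, (0 <= kap A)%E.
Hypothesis kap_subset : forall A B, A \subset B -> (kap A <= kap B)%E.
Hypothesis kap_setU : forall A B x, x \in A -> x \in B -> (kap (A :|: B) <= kap A + kap B)%E.
Hypothesis kap_pair : {in K &, forall u v, (kap [set u; v] <= (d u v)%:E)%E}.
Hypothesis kap_set1 : forall v, kap [set v] = 0%E.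

Local Notation h := h1.+1.

Fixpoint rmost t : T := match t with Leaf v => v | Node _ _ r => rmost r end.

Fixpoint rspine t : R :=
  match t with Leaf _ => 0 | Node v _ r => d v (troot r) + rspine r end.

(* The tree is cut at the nodes of depth m, m + h, m + 2h, ...; a node is
   represented by the rightmost leaf of its left subtree (a leaf by itself).
   [frontier t m] lists the representatives of the nodes of depth m, and the
   piece below a cut node lists those of its descendants h levels deeper. *)
Fixpoint frontier t m : seq T :=
  match t, m with
  | Leaf v, _ => [:: v]
  | Node _ l _, 0 => [:: rmost l]
  | Node _ l r, m'.+1 => frontier l m' ++ frontier r m'
  end.

Fixpoint frontier_weight t m : R :=
  match t, m with
  | Leaf _, _ => 0
  | Node v l _, 0 => d v (troot l) + rspine l
  | Node v l r, m'.+1 =>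
      d v (troot l) + d v (troot r) + frontier_weight l m' + frontier_weight r m'
  end.

Fixpoint pieces t m : seq (seq T) :=
  match t, m with
  | Leaf _, _ => [::]
  | Node _ l r, 0 => (frontier l h1 ++ frontier r h1) :: (pieces l h1 ++ pieces r h1)
  | Node _ l r, m'.+1 => pieces l m' ++ pieces r m'
  end.

(* Every tree edge once, plus the path from each cut node to its representative. *)
Fixpoint pieces_weight t m : R :=
  match t, m with
  | Leaf _, _ => 0
  | Node v l r, 0 => d v (troot l) + rspine l +
      (d v (troot l) + d v (troot r) + pieces_weight l h1 + pieces_weight r h1)
  | Node v l r, m'.+1 =>
      d v (troot l) + d v (troot r) + pieces_weight l m' + pieces_weight r m'
  end.

Lemma rspine_ge0 t : 0 <= rspine t.
Proof. by elim: t => [v|v l _ r IHr] //=; rewrite addr_ge0. Qed.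

Lemma pieces_weight_avg t :
  \sum_(0 <= m < h) pieces_weight t m + rspine t <= h.+1%:R * tweight d t.
Proof.
elim: t => [v|v l IHl r IHr] /=; first by rewrite big1 ?addr0 ?mulr0.
rewrite big_nat_recl //= !big_split /= !sumr_const_nat subn0.
move: IHl IHr; rewrite !big_nat_recr //= -!natr1.
rewrite -[d v (troot l) *+ h1]mulr_natl -[d v (troot r) *+ h1]mulr_natl.
set H := h1%:R.
have := d_ge0 v (troot l); have := d_ge0 v (troot r).
move: (pieces_weight l h1) (pieces_weight r h1) => a b.
move: (\sum_(0 <= i < h1) pieces_weight l i) (\sum_(0 <= i < h1) pieces_weight r i) => x y.
move: (d v (troot l)) (d v (troot r)) (tweight d l) (tweight d r) (rspine l) (rspine r).
move=> p q wl wr ql qr *.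
have -> : (H + 1 + 1) * (p + q + wl + wr) =
  (H + 1) * wl + wl + ((H + 1) * wr + wr) + H * p + H * q + 2 * p + 2 * q by ring.
lra.
Qed.

Lemma exists_cheap_offset t :
  exists2 m, (m < h)%N & pieces_weight t m <= (1 + h%:R^-1) * tweight d t.
Proof.
have [/existsP[m wm]|/existsPn costly] :=
  boolP [exists m : 'I_h, pieces_weight t m <= (1 + h%:R^-1) * tweight d t].
  by exists m.
have lt_m m : (0 <= m < h)%N -> (1 + h%:R^-1) * tweight d t < pieces_weight t m.
  by case/andP=> _ mh; rewrite ltNge; apply: (costly (Ordinal mh)).
have := ltr_sum_nat (isT : (0 < h)%N) lt_m; rewrite sumr_const_nat subn0.
have -> : (1 + h%:R^-1) * tweight d t *+ h = h.+1%:R * tweight d t.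
  by rewrite -mulr_natr mulrAC mulrDl mul1r mulVf ?pnatr_eq0 // -natr1; ring.
have := pieces_weight_avg t; have := rspine_ge0 t; lra.
Qed.

Lemma kap_fine A (y : R) : (kap A <= y%:E)%E -> kap A = (fine (kap A))%:E /\ fine (kap A) <= y.
Proof.
move=> Ay; have Afin : kap A \is a fin_num.
  by rewrite ge0_fin_numE ?kap_ge0 //; apply: le_lt_trans Ay (ltry _).
by rewrite -lee_fin fineK.
Qed.

Lemma kap_setU1 u w A (y : R) : u \in K -> w \in K -> w \in A -> (kap A <= y%:E)%E ->
  (kap (u |: A) <= (d u w + y)%:E)%E.
Proof.
move=> Ku Kw wA Ay.
have wuw : w \in [set u; w] by rewrite !inE eqxx orbT.
have sub : u |: A \subset [set u; w] :|: A.
  by apply/fintype.subsetP => z; rewrite !inE => /orP[]->; rewrite ?orbT.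
apply: le_trans (kap_subset sub) _; apply: le_trans (kap_setU wuw wA) _.
by rewrite EFinD leeD // kap_pair.
Qed.

Section Subtrees.
Variables (v : T) (l r : btree T).
Hypothesis lblK : {subset labels (Node v l r) <= K}.

Lemma node_labelK : v \in K.
Proof. by apply: lblK; rewrite inE eqxx. Qed.

Lemma left_labelsK : {subset labels l <= K}.
Proof. by move=> y /(labels_sub_node v l r).1/lblK. Qed.

Lemma right_labelsK : {subset labels r <= K}.
Proof. by move=> y /(labels_sub_node v l r).2/lblK. Qed.

End Subtrees.

Lemma rmost_cost t : {subset labels t <= K} -> (kap [set troot t; rmost t] <= (rspine t)%:E)%E.
Proof.
elim: t => [v|v l _ r IHr] /= lblK; first by rewrite finset.setUid kap_set1.
have rK := right_labelsK lblK.
apply: le_trans (kap_subset (B := v |: [set troot r; rmost r]) _) _.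
  by apply/fintype.subsetP => z; rewrite !inE => /orP[]->; rewrite ?orbT.
apply: kap_setU1 (node_labelK lblK) (rK _ (troot_labels r)) _ (IHr rK).
by rewrite !inE eqxx.
Qed.

Lemma frontier_cost t m : {subset labels t <= K} ->
  (kap (troot t |: [set:: frontier t m]) <= (frontier_weight t m)%:E)%E.
Proof.
elim: t m => [v m lblK|v l IHl r IHr m lblK] /=.
  have -> : v |: [set:: [:: v]] = [set v] by apply/setP => z; rewrite !inE ?orbF orbb.
  by rewrite kap_set1.
have vK := node_labelK lblK; have lK := left_labelsK lblK; have rK := right_labelsK lblK.
have vv A : v \in v |: A by rewrite !inE eqxx.
have rlK := lK _ (troot_labels l); have rrK := rK _ (troot_labels r).
case: m => [|m].
  apply: le_trans (kap_subset (B := v |: [set troot l; rmost l]) _) _.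
    by apply/fintype.subsetP => z; rewrite !inE ?orbF => /orP[]->; rewrite ?orbT.
  by apply: kap_setU1 vK rlK _ (rmost_cost lK); rewrite !inE eqxx.
apply: le_trans (kap_subset (B := (v |: (troot l |: [set:: frontier l m])) :|:
                                  (v |: (troot r |: [set:: frontier r m]))) _) _.
  by apply/fintype.subsetP => z; rewrite !inE mem_cat => /or3P[]->; rewrite ?orbT.
apply: le_trans (kap_setU (vv _) (vv _)) _.
rewrite (_ : _ + _ + _ + _ = d v (troot l) + frontier_weight l m +
                             (d v (troot r) + frontier_weight r m)); last by ring.
rewrite EFinD; apply: leeD.
  by apply: kap_setU1 vK rlK _ (IHl m lK); rewrite !inE eqxx.
by apply: kap_setU1 vK rrK _ (IHr m rK); rewrite !inE eqxx.
Qed.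

Lemma frontier_kap t m : {subset labels t <= K} ->
  (kap [set:: frontier t m] <= (frontier_weight t m)%:E)%E.
Proof.
by move=> lblK; apply: le_trans (frontier_cost m lblK); apply/kap_subset/finset.subsetUr.
Qed.

Lemma pieces_cost t m : {subset labels t <= K} ->
  {in pieces t m, forall s, kap [set:: s] = (fine (kap [set:: s]))%:E} /\
  \sum_(s <- pieces t m) fine (kap [set:: s]) + frontier_weight t m <= pieces_weight t m.
Proof.
elim: t m => [v|v l IHl r IHr] m /= lblK; first by rewrite big_nil add0r.
have lK := left_labelsK lblK; have rK := right_labelsK lblK.
case: m => [|m].
  have [finl suml] := IHl h1 lK; have [finr sumr] := IHr h1 rK.
  have [fin0 sum0] := kap_fine (frontier_kap (t := Node v l r) h lblK).
  split; first by move=> s; rewrite inE mem_cat => /or3P[/eqP->|/finl|/finr].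
  by rewrite big_cons big_cat /=; move: sum0 => /=; lra.
have [finl suml] := IHl m lK; have [finr sumr] := IHr m rK.
split; first by move=> s; rewrite mem_cat => /orP[/finl|/finr].
by rewrite big_cat /=; lra.
Qed.

Lemma size_frontier t m : (size (frontier t m) <= 2 ^ m)%N.
Proof.
elim: t m => [v|v l IHl r IHr] [|m] //=; first by rewrite expn_gt0.
by rewrite size_cat expnS mul2n -addnn leq_add.
Qed.

Lemma rmost_leaves t : rmost t \in leaves t.
Proof. by elim: t => [v|v l _ r IHr] /=; rewrite ?inE ?mem_cat ?IHr ?orbT. Qed.

Lemma frontier_leaves t m : {subset frontier t m <= leaves t}.
Proof.
elim: t m => [v|v l IHl r IHr] [|m] y //=.
  by rewrite inE => /eqP->; rewrite mem_cat rmost_leaves.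
by rewrite !mem_cat => /orP[/IHl|/IHr] ->; rewrite ?orbT.
Qed.

Lemma pieces_leaves t m s : s \in pieces t m -> {subset s <= leaves t}.
Proof.
elim: t m => [v|v l IHl r IHr] [|m] //= sp y; rewrite ?inE !mem_cat in sp *.
  case/or3P: sp => [/eqP->|/IHl sl|/IHr sr]; rewrite ?mem_cat.
  - by case/orP=> /frontier_leaves ->; rewrite ?orbT.
  - by move/sl->.
  - by move/sr->; rewrite orbT.
by case/orP: sp => [/IHl|/IHr] ss /ss->; rewrite ?orbT.
Qed.

Lemma size_pieces t m s : s \in pieces t m -> (size s <= 2 ^ h)%N.
Proof.
elim: t m => [v|v l IHl r IHr] [|m] //=; rewrite ?inE mem_cat.
  case/or3P=> [/eqP->|/IHl//|/IHr//].
  by rewrite size_cat expnS mul2n -addnn leq_add ?size_frontier.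
by case/orP=> [/IHl|/IHr].
Qed.

Definition hedge_rel (H : seq (seq T)) : rel T :=
  fun x y => has (fun s => (x \in s) && (y \in s)) H.

Lemma hedge_relC (H : seq (seq T)) : connect_sym (hedge_rel H).
Proof. by apply: sym_connect_sym => x y; apply: eq_has => s; rewrite andbC. Qed.

Lemma connect_hedge_sub (H1 H2 : seq (seq T)) :
  (forall s, s \in H1 -> exists2 s', s' \in H2 & {subset s <= s'}) ->
  subrel (connect (hedge_rel H1)) (connect (hedge_rel H2)).
Proof.
move=> H12; apply: connect_sub => x y /hasP[s sH /andP[xs ys]].
have [s' s'H ss'] := H12 s sH; apply/connect1/hasP; exists s' => //.
by rewrite !ss'.
Qed.

Lemma connect_hedge_in H s (x y : T) : s \in H -> x \in s -> y \in s ->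
  connect (hedge_rel H) x y.
Proof. by move=> sH xs ys; apply/connect1/hasP; exists s => //; rewrite xs ys. Qed.

Lemma connect_hedge_cons (s1 s2 : seq T) (H1 H2 : seq (seq T)) :
  {subset s1 <= s2} -> s2 \in H2 -> {subset H1 <= H2} ->
  forall x y, connect (hedge_rel (s1 :: H1)) x y -> connect (hedge_rel H2) x y.
Proof.
move=> s12 sH2 H12; apply: connect_hedge_sub => s; rewrite inE.
by case/orP=> [/eqP->|/H12 sH]; [exists s2 | exists s].
Qed.

Lemma leaves_connected t m a : a \in leaves t ->
  exists2 b, b \in frontier t m & connect (hedge_rel (frontier t m :: pieces t m)) a b.
Proof.
elim: t m a => [v|v l IHl r IHr] m a /=.
  by rewrite inE => /eqP->; exists v; rewrite ?inE ?connect0.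
have subl (U : eqType) (X Y : seq U) : {subset X <= X ++ Y}.
  by move=> y yX; rewrite mem_cat yX.
have subr (U : eqType) (X Y : seq U) : {subset Y <= X ++ Y}.
  by move=> y yY; rewrite mem_cat yY orbT.
rewrite mem_cat; case: m => [|m] /= alr.
  set top := frontier l h1 ++ frontier r h1.
  set HH := [:: rmost l] :: top :: (pieces l h1 ++ pieces r h1).
  have topH : top \in HH by rewrite !inE eqxx orbT.
  have liftH (X : seq (seq T)) :
    {subset X <= pieces l h1 ++ pieces r h1} -> {subset X <= HH}.
    by move=> sX y /sX yp; rewrite !inE yp !orbT.
  have liftl := connect_hedge_cons (subl _ _ _) topH (liftH _ (subl _ _ _)).
  have liftr := connect_hedge_cons (subr _ _ _) topH (liftH _ (subr _ _ _)).
  have [b btop ab] : exists2 b, b \in top & connect (hedge_rel HH) a b.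
    case/orP: alr => [/(IHl h1)|/(IHr h1)] [b bf ab].
    + by exists b; [exact: subl | exact: liftl].
    + by exists b; [exact: subr | exact: liftr].
  have [b' b'f rb'] := IHl h1 _ (rmost_leaves l).
  exists (rmost l); first exact: mem_head.
  apply: connect_trans ab (connect_trans (connect_hedge_in topH btop (subl _ _ _ _ b'f)) _).
  by rewrite hedge_relC; exact: liftl.
set top := frontier l m ++ frontier r m.
have topH : top \in top :: (pieces l m ++ pieces r m) by exact: mem_head.
have liftH (X : seq (seq T)) : {subset X <= pieces l m ++ pieces r m} ->
    {subset X <= top :: (pieces l m ++ pieces r m)}.
  by move=> sX y /sX yp; rewrite inE yp orbT.
have liftl := connect_hedge_cons (subl _ _ _) topH (liftH _ (subl _ _ _)).
have liftr := connect_hedge_cons (subr _ _ _) topH (liftH _ (subr _ _ _)).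
case/orP: alr => [/(IHl m)|/(IHr m)] [b bf ab].
  by exists b; [exact: subl | exact: liftl].
by exists b; [exact: subr | exact: liftr].
Qed.

Lemma tree_cover t : {subset labels t <= K} ->
  exists H : seq (seq T),
    [/\ forall s, s \in H -> {subset s <= leaves t},
        forall s, s \in H -> (size s <= 2 ^ h)%N,
        (\sum_(s <- H) kap [set:: s] <= ((1 + h%:R^-1) * tweight d t)%:E)%E &
        {in leaves t &, forall u v, connect (hedge_rel H) u v}].
Proof.
move=> lblK; have [m mh cheap] := exists_cheap_offset t.
exists (frontier t m :: pieces t m); split.
- by move=> s; rewrite inE => /orP[/eqP->|/pieces_leaves//]; apply: frontier_leaves.
- move=> s; rewrite inE => /orP[/eqP->|/size_pieces//].
  by apply: leq_trans (size_frontier t m) _; rewrite leq_exp2l // ltnW.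
- have [finH sumH] := pieces_cost m lblK.
  rewrite big_cons (eq_big_seq (fun s => (fine (kap [set:: s]))%:E)) // sumEFin.
  apply: le_trans (leeD (frontier_kap m lblK) (lexx _)) _.
  by rewrite -EFinD lee_fin addrC; apply: le_trans sumH cheap.
- move=> u v ut vt.
  have [b bf ub] := leaves_connected m ut; have [b' b'f vb'] := leaves_connected m vt.
  apply: connect_trans ub (connect_trans (connect_hedge_in (mem_head _ _) bf b'f) _).
  by rewrite hedge_relC.
Qed.

End LevelDecomposition.

Lemma sum_set_seq_le (R : realType) (T : finType) (s : seq T) (f : T -> \bar R) :
  (forall x, (0 <= f x)%E) -> (\sum_(x in [set:: s]) f x <= \sum_(x <- s) f x)%E.
Proof.
move=> f0; have -> : (\sum_(x in [set:: s]) f x = \sum_(x in undup s) f x)%E.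
  by apply: eq_bigl => x; rewrite inE mem_undup.
rewrite -big_uniq ?undup_uniq //; elim: s => [|x s IH] //=.
rewrite big_cons; case: ifP => xs; first by apply: le_trans IH _; rewrite leeDr.
by rewrite big_cons leeD2l.
Qed.

Definition hyperedge_rel (V : finType) (Sk : {set {set V}}) : rel V :=
  fun a b => [exists X in Sk, (a \in X) && (b \in X)].

Section RestrictedCover.
Variables (R : realType) (V E : finType) (eu ev : E -> V) (c : E -> R).
Hypothesis c_ge0 : forall e, 0 <= c e.
Local Notation adj := (adj eu ev).
Local Notation cost := (cost eu ev c).
Local Notation comp := (Defs.comp eu ev).
Local Notation d := (pair_cost eu ev c).

Lemma steiner_tree (F : {set E}) (S : {set V}) x : x \in S -> connects eu ev F S ->
  exists t, [/\ leaves t =i S, {subset labels t <= comp F x} &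
                tweight d t <= \sum_(e in F) c e].
Proof.
move=> xS cFS.
have [t [rt lvt lbt wt]] := spanning_tree c_ge0 (pair_costxx eu ev c_ge0)
  (@pair_costC _ _ _ eu ev c) (pair_cost_edge eu ev c_ge0) F x.
have d_tri : {in comp F x & &, forall u v w, d u w <= d u v + d v w}.
  move=> u v w xu xv xw.
  exact: (pair_cost_triangle c_ge0 (comp_connect xu xv) (comp_connect xv xw)).
have Sx : {subset S <= comp F x} by move=> y yS; rewrite mem_comp; move/connectsP: cFS; apply.
have := pruneP S (pair_cost_ge0 eu ev c_ge0) d_tri t.
case: (prune S t) => [t'|]; last by move/(_ x (lvt _ (Sx _ xS))); rewrite xS.
case=> lv' lb' w'; exists t'; split.
- move=> y; rewrite lv' !inE; case yS: (y \in S); rewrite ?andbF ?andbT //.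
  exact: lvt (Sx _ yS).
- by move=> y /lb' /lbt.
- have := w' x (Sx _ xS) lbt; rewrite rt pair_costxx // add0r.
  have := pair_cost_ge0 eu ev c_ge0 x (troot t').
  have := comp_cost_le_sum eu ev c_ge0 F x; lra.
Qed.

Lemma restricted_cover h1 (S : {set V}) : connects eu ev [set: E] S ->
  exists Sk : {set {set V}},
    [/\ forall X, X \in Sk -> X \subset S /\ (#|X| <= 2 ^ h1.+1)%N,
        (\sum_(X in Sk) cost X <= (1 + h1.+1%:R^-1)%:E * cost S)%E &
        {in S &, forall u v, connect (hyperedge_rel Sk) u v}].
Proof.
move=> cS; have coef_ge0 : 0 <= 1 + h1.+1%:R^-1 :> R by rewrite addr_ge0 ?invr_ge0.
have [S0|[x xS]] := set_0Vmem S.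
  exists finset.set0; split=> [X||u v]; rewrite ?S0 ?inE //.
  rewrite big_pred0 => [|X]; last by rewrite inE.
  by apply: mule_ge0; [rewrite lee_fin | apply: cost_ge0].
have [cinf|[F cFS costS]] := cost_pinfty_or_attained eu ev c S.
  by have := cost_le_sum c cS; rewrite cinf leye_eq.
have [t [lvt lbt wt]] := steiner_tree xS cFS.
have kap_pair : {in comp F x &, forall u v, (cost [set u; v] <= (d u v)%:E)%E}.
  by move=> u v xu xv; rewrite (cost_pair c_ge0 (comp_connect xu xv)).
have [H [HS Hsize Hcost Hconn]] := tree_cover h1 (pair_cost_ge0 eu ev c_ge0)
  (cost_ge0 eu ev c_ge0) (le_cost eu ev c) (cost_setU eu ev c_ge0) kap_pair
  (cost_set1 eu ev c_ge0) lbt.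
exists [set:: [seq [set:: s] | s <- H]]; split.
- move=> X; rewrite inE => /mapP[s sH ->]; split.
    by apply/fintype.subsetP => y; rewrite inE => /(HS _ sH); rewrite lvt.
  by rewrite cardsE; apply: leq_trans (card_size s) (Hsize _ sH).
- apply: le_trans (sum_set_seq_le _ (cost_ge0 eu ev c_ge0)) _.
  rewrite big_map; apply: le_trans Hcost _.
  by rewrite costS -EFinM lee_fin ler_wpM2l.
- move=> u v; rewrite -!lvt => ut vt; apply: connect_sub (Hconn u v ut vt) => a b.
  case/hasP=> s sH /andP[a_s b_s]; apply/connect1/existsP; exists [set:: s].
  by rewrite !inE a_s b_s !andbT; apply/mapP; exists s.
Qed.

End RestrictedCover.

Lemma le_lebesgue_measure (R : realType) (A B : set R) : (A `<=` B)%classic ->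
  (lebesgue_measure A <= lebesgue_measure B)%E.
Proof.
move=> AB; rewrite /lebesgue_measure /lebesgue_stieltjes_measure /measure_extension.
exact: le_mu_ext.
Qed.

Lemma lebesgue_measure_ge0 (R : realType) (A : set R) : (0 <= lebesgue_measure A)%E.
Proof.
by rewrite /lebesgue_measure /lebesgue_stieltjes_measure /measure_extension; apply: mu_ext_ge0.
Qed.

Lemma le_tmeas (R : realType) (P : R -> Prop) (t0 t : R) : t0 <= t -> tmeas P t0 <= tmeas P t.
Proof.
move=> tt.
have fin (X : set R) : (X `<=` [set` `[0, t[%R])%classic -> lebesgue_measure X \is a fin_num.
  move=> sX; rewrite ge0_fin_numE ?lebesgue_measure_ge0 //.
  apply: le_lt_trans (le_lebesgue_measure sX) _.
  by rewrite lebesgue_measure_itv /=; case: ifP; rewrite ?ltry.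
have sub0 : ([set s | 0 <= s /\ s < t0 /\ P s] `<=` [set s | 0 <= s /\ s < t /\ P s])%classic.
  by move=> s [s0 [st0 Ps]]; do !split=> //; apply: lt_le_trans tt.
have sub1 : ([set s | 0 <= s /\ s < t /\ P s] `<=` [set` `[0, t[%R])%classic.
  by move=> s [s0 [st _]]; rewrite /= in_itv /= s0 st.
exact: fine_le (fin _ (subset_trans sub0 sub1)) (fin _ sub1) (le_lebesgue_measure sub0).
Qed.

Lemma not_disjointP (T : finType) (A B : {set T}) :
  reflect (exists2 x, x \in A & x \in B) (~~ [disjoint A & B]).
Proof.
rewrite -setI_eq0; apply: (iffP (set0Pn _)) => [[x]|[x xA xB]].
  by rewrite inE => /andP[xA xB]; exists x.
by exists x; rewrite inE xA xB.
Qed.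

Section Run.
Variables (R : realType) (V E : finType) (eu ev : E -> V) (c : E -> R)
  (D : {set {set V}}) (eps : R) (F : R -> {set E}) (Act : R -> {set {set V}}).
Hypothesis run : valid_run eu ev c D eps F Act.
Implicit Types (t : R) (S X Y Z : {set V}) (Sk : {set {set V}}).
Local Notation adj := (adj eu ev).
Local Notation comp := (Defs.comp eu ev).
Local Notation tau := (tau Act).
Local Notation act_conn_set := (act_conn_set eu ev F Act).
Local Notation mrel := (mrel Act).

Lemma tight_subset t0 t : 0 <= t0 -> t0 <= t -> F t0 \subset F t.
Proof.
case: run => tightE _ _ t00 tt; rewrite tightE // tightE ?(le_trans t00 tt) //.
apply/fintype.subsetP => e; rewrite !inE => /le_trans; apply.
by apply: ler_sum => S _; apply: le_tmeas.
Qed.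

Lemma active_comp t X u : 0 <= t -> X \in Act t -> u \in X -> X = comp (F t) u.
Proof.
case: run => _ actE _ t0; rewrite actE // inE => /andP[/imsetP[y _ ->] _].
rewrite inE => yu; apply/setP => z; rewrite !inE.
by rewrite (same_connect (connect_adjC eu ev (F t)) yu).
Qed.

Lemma active_eq t X Y u v : 0 <= t -> X \in Act t -> Y \in Act t -> u \in X -> v \in Y ->
  connect (adj (F t)) u v -> X = Y.
Proof.
move=> t0 XA YA uX vY uv; rewrite (active_comp t0 XA uX) (active_comp t0 YA vY).
by apply/setP => z; rewrite !inE (same_connect (connect_adjC eu ev (F t)) uv).
Qed.

Lemma tau_le t w : 0 <= t -> (forall Z, Z \in Act t -> w \notin Z) -> (tau w <= t%:E)%E.
Proof.
move=> t0 inactive; apply: ge_ereal_sup => _ [t' [t'0 activeP] <-].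
rewrite lee_fin leNgt; apply/negP => tt'.
by have [Z ZA wZ] := activeP t t0 tt'; move: (inactive Z ZA); rewrite wZ.
Qed.

Lemma act_conn_set_connects S : act_conn_set S -> connects eu ev [set: E] S.
Proof.
move=> acS; apply/connectsP => u v uS vS; have [t [_ uv _ _]] := acS u v uS vS.
by move: uv; rewrite inE; apply/connect_adj_subset/finset.subsetT.
Qed.

Lemma act_conn_set_sub_comp S t w : 0 <= t -> act_conn_set S -> w \in S ->
  (tau w <= t%:E)%E -> S \subset comp (F t) w.
Proof.
move=> t0 acS wS tw; apply/fintype.subsetP => z zS.
have [t1 [t10 zt1 t1w _]] := acS w z wS zS.
have t1t : t1 <= t by rewrite -lee_fin (le_trans t1w tw).
by move: zt1; rewrite !inE; apply/connect_adj_subset/(tight_subset t10 t1t).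
Qed.

Lemma connect_mrel_subset Sk S t : (forall T, T \in Sk -> T \subset S) ->
  subrel (connect (mrel Sk t)) (connect (mrel [set S] t)).
Proof.
move=> subS; apply: connect_sub => X Y /and3P[XA YA /existsP[T /andP[TSk /andP[TX TY]]]].
apply/connect1/and3P; split=> //; apply/existsP; exists S; rewrite set11 /=.
by apply/andP; split; [apply: contra TX | apply: contra TY]; apply: disjointWl (subS _ TSk).
Qed.

Lemma connect_mrel_active Sk S t X Y u v : 0 <= t ->
  (forall T, T \in Sk -> T \subset S) ->
  {in S, forall w, exists2 Z, Z \in Act t & w \in Z} ->
  connect (hyperedge_rel Sk) u v -> u \in S -> v \in S ->
  X \in Act t -> u \in X -> Y \in Act t -> v \in Y -> connect (mrel Sk t) X Y.
Proof.
move=> t0 subS covered uv uS vS XA uX YA vY.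
pose reached := [pred w | (w \in S) ==>
  [forall Z in Act t, (w \in Z) ==> connect (mrel Sk t) X Z]].
have step a b : hyperedge_rel Sk a b -> a \in reached -> b \in reached.
  case/existsP=> T /and3P[TSk aT bT] /implyP reach_a; apply/implyP => bS.
  have aS := fintype.subsetP (subS _ TSk) _ aT.
  have [Za ZaA aZa] := covered a aS.
  apply/forallP => Z; apply/implyP => ZA; apply/implyP => bZ.
  have := forallP (reach_a aS) Za; rewrite ZaA aZa => /connect_trans; apply.
  apply/connect1/and3P; split=> //; apply/existsP; exists T.
  by rewrite TSk /=; apply/andP; split; apply/not_disjointP; [exists a | exists b].
have reach_u : u \in reached.
  apply/implyP => _; apply/forallP => Z; apply/implyP => ZA; apply/implyP => uZ.
  by rewrite (active_eq t0 ZA XA uZ uX (connect0 _ _)) connect0.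
have := connect_stable step uv reach_u; rewrite inE vS /= => /forallP/(_ Y).
by rewrite YA vY.
Qed.

Lemma connect_mrel_eq Sk S t : 0 <= t -> act_conn_set S ->
  (forall T, T \in Sk -> T \subset S) ->
  {in S &, forall u v, connect (hyperedge_rel Sk) u v} ->
  connect (mrel Sk t) =2 connect (mrel [set S] t).
Proof.
move=> t0 acS subS conS X Y; apply/idP/idP; first exact: connect_mrel_subset.
apply: connect_sub => {}X {}Y /and3P[XA YA /existsP[S' /andP[]]].
rewrite inE => /eqP-> /andP[/not_disjointP[u uS uX] /not_disjointP[v vS vY]].
have [covered|] := boolP [forall w in S, exists Z in Act t, w \in Z].
  apply: connect_mrel_active (conS _ _ uS vS) uS vS XA uX YA vY => // w wS.
  by have /existsP[Z /andP[ZA wZ]] := implyP (forallP covered w) wS; exists Z.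
rewrite negb_forall_in => /existsP[w /andP[wS]]; rewrite negb_exists => /forallP idle.
have tw : (tau w <= t%:E)%E by apply: tau_le => // Z ZA; move: (idle Z); rewrite ZA.
have /fintype.subsetP Sw := act_conn_set_sub_comp t0 acS wS tw.
have uv : connect (adj (F t)) u v := comp_connect (Sw _ uS) (Sw _ vS).
by rewrite (active_eq t0 XA YA uX vY uv) connect0.
Qed.

Lemma gain_eq Sk S : act_conn_set S -> (forall T, T \in Sk -> T \subset S) ->
  {in S &, forall u v, connect (hyperedge_rel Sk) u v} ->
  gain Act Sk = gain Act [set S].
Proof.
move=> acS subS conS; congr (_ * _)%E; apply: eq_integral => t; rewrite inE /= => t0.
suff -> : merged Act Sk t = merged Act [set S] t by [].
apply: eq_imset => X; apply: eq_bigl => Y.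
by rewrite (connect_mrel_eq t0 acS subS conS).
Qed.

End Run.

Theorem lemma3p8 (R : realType) (V E : finType) (eu ev : E -> V)
  (c : E -> R) (D : {set {set V}}) (eps : R)
  (F : R -> {set E}) (Act : R -> {set {set V}}) (k : nat) (S : {set V}) :
  (forall e, 0 <= c e) ->
  (forall d, d \in D -> #|d| = 2%N) ->
  0 <= eps ->
  valid_run eu ev c D eps F Act ->
  (2 <= k)%N ->
  act_conn_set eu ev F Act S ->
  exists Sk : {set {set V}},
    [/\ (forall T, T \in Sk -> T \subset S /\ (#|T| <= k)%N),
        (\sum_(T in Sk) cost eu ev c T
           <= (1 + ((trunc_log 2 k)%:R)^-1)%:E * cost eu ev c S)%E &
        gain Act Sk = gain Act [set S]].
Proof.
move=> c_ge0 _ _ run k_ge2 acS.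
have [h1 hE] : exists h1, trunc_log 2 k = h1.+1.
  by exists (trunc_log 2 k).-1; rewrite prednK // trunc_log_gt0.
have hk : (2 ^ h1.+1 <= k)%N by rewrite -hE trunc_logP // (leq_trans _ k_ge2).
have [Sk [SkS costSk conSk]] := restricted_cover c_ge0 h1 (act_conn_set_connects acS).
exists Sk; rewrite hE; split.
- by move=> T /SkS[TS Tcard]; split=> //; apply: leq_trans Tcard hk.
- exact: costSk.
- exact (gain_eq run acS (fun T TSk => (SkS T TSk).1) conSk).
Qed.
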